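(* Let $G$ be a Chevalley group with BN-pair data $B=UT_0$, $W_0$ as in the context. Let $\chi$ be a complex character of $G$ with $\chi(u)=0$ for every $p$-element $u\neq 1$ of $G$, and let $\beta\in\mathrm{Irr}\,T_0$ be an irreducible constituent of the truncation $\overline{\chi}_{B/U}$ (viewed as a character of $B/U\cong T_0$). Then $c_\chi:=\chi(1)/|G|_p\ge |W_0\beta|$. Moreover, if $\chi(1)=|G|_p$ then $\overline{\chi}_{B/U}$ is irreducible and $W_0$-invariant.
   Context: $G=\mathbf G^{Fr}$ is a finite group of fixed points of a Frobenius endomorphism on a simple simply connected algebraic group over an algebraically closed field of characteristic $p$. $G$ has a split BN-pair: $B$ a Borel subgroup, $U=O_p(B)$ a Sylow $p$-subgroup of $G$, $T_0=B\cap N$ a maximal torus with $B=UT_0$, $W_0=N/T_0$ the Weyl group of the BN-pair acting on $\mathrm{Irr}\,T_0$ by conjugation. For $H\le G$ with $K\trianglelefteq H$ and a class function $\eta$ on $G$, the truncation (Harish-Chandra restriction) $\overline{\eta}_{H/K}$ is the class function on $H/K$ given by $hK\mapsto\frac{1}{|K|}\sum_{k\in K}\eta(hk)$. *)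

From HB Require Import structures.
From mathcomp Require Import all_boot all_order all_algebra all_fingroup
  all_solvable all_field all_character.
Set Implicit Arguments.
Unset Strict Implicit.
Unset Printing Implicit Defensive.
Import GroupScope GRing.Theory Num.Theory.
Local Open Scope ring_scope.

Section Truncation.
Variables (gT : finGroupType) (G H K : {group gT}) (eta : 'CF(G)).

(* The guard [H \subset G] only serves to
   make the definition total; it holds in all uses. *)
Definition ffun_Trunc :=
  [ffun C : coset_of K =>
     ((#|K|%:R)^-1 * \sum_(z in val C) eta z) *+ ((C \in (H / K)%g) && (H \subset G))].

Fact cfTrunc_subproof : is_class_fun <<(H / K)%g>> ffun_Trunc.
Proof.
rewrite genGid; apply: intro_class_fun => [|C /negPf nC]; last first.
  by rewrite nC.
move=> _ _ /morphimP[x Nx Hx ->] /morphimP[y Ny Hy ->].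
rewrite -morphJ //= ?mem_morphim ?groupJ //=.
case sHG: (H \subset G); last by [].
congr (_ *+ _); congr (_ * _).
rewrite (val_coset (groupJ Nx Ny)) (val_coset Nx).
have ->: K :* x ^ y = (K :* x) :^ y by rewrite conjsMg conjg_set1 (normP Ny).
rewrite /conjugate big_imset /=; last by move=> a b _ _; apply: conjg_inj.
apply: eq_bigr => z _; rewrite cfunJ //; exact: (subsetP sHG).
Qed.

Definition cfTrunc : 'CF((H / K)%g) := Cfun 1 cfTrunc_subproof.

End Truncation.

(* For a complement T of K in H (H = K T), the truncation viewed as a class
   function of T via the isomorphism T ~= H/K, t |-> tK. *)
Definition cfTruncT (gT : finGroupType) (G H K T : {group gT}) (eta : 'CF(G))
  : 'CF(T) := 'Res[T] (cfMod (cfTrunc H K eta)).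

From HB Require Import structures.
From mathcomp Require Import all_boot all_order all_algebra all_fingroup
  all_solvable all_field all_character.
Import GroupScope GRing.Theory Num.Theory.

(* The heart of the proof is that Harish-Chandra induction from T0 is
   W0-invariant: for psi in 'CF(T0) and n in N, Ind_B^G (psi^n inflated to B)
   equals Ind_B^G (psi inflated).  We derive it from
   1. the Bruhat decomposition G = disjoint union of the double cosets BnB,
      n running over N/T0, established from the BN-pair axioms alone;
   2. the Mackey-type formula
        '[Ind infl a, Ind infl b] = |T0|^-1 sum_(n in N) '[a, b^(n^-1)],
      obtained by summing over the Bruhat cells, the inner sum on a cell BnB
      being computed through the factorisation B = U T0;
   3. a norm computation: the formula makes '[X, Y], '[X] and '[Y] equal, for
      X and Y the two induced characters, so '[X - Y] = 0.
   The truncation is adjoint to this induction ('[trunc chi, psi] =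
   '[chi, Ind infl psi]), so its multiplicities are W0-invariant; its degree
   is chi(1)/|U| because chi vanishes on U^#.  Counting the W0-orbit of beta
   among the constituents of the truncation then gives the bound. *)

Set Implicit Arguments.
Unset Strict Implicit.
Unset Printing Implicit Defensive.

Section SdprodSum.
Local Open Scope ring_scope.

Lemma sum_sdprod (gT : finGroupType) (G K H : {group gT}) (R : nmodType)
    (defG : K ><| H = G) (f : gT -> R) :
  \sum_(x in G) f x = \sum_(k in K) \sum_(h in H) f (k * h)%g.
Proof.
have [_ _ defKH _ tiKH] := sdprod_context defG.
rewrite -defKH -[(K * H)%g]/[set (x * y)%g | x in K, y in H].
rewrite curry_imset2X big_imset /=; last first.
  move=> [k1 h1] [k2 h2]; rewrite !inE /= => /andP[Kk1 Hh1] /andP[Kk2 Hh2] E.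
  have := divgrMid tiKH Kk1 Hh1; have := remgrMid tiKH Kk1 Hh1.
  by rewrite E divgrMid ?remgrMid // => -> ->.
rewrite pair_big_dep /=; apply: eq_big => [[k h]|[k h] _] //=.
by rewrite inE.
Qed.

End SdprodSum.

Section BNpair.

Variables (gT : finGroupType) (G B N T0 : {group gT}) (Sg : {set coset_of T0}).

Hypotheses (sBG : B \subset G) (sNG : N \subset G) (genG : G :=: <<B :|: N>>)
  (defT0 : T0 :=: B :&: N) (nT0N : T0 <| N)
  (sSW : Sg \subset (N / T0)%g) (invS : forall s, s \in Sg -> #[s]%g = 2%N)
  (genW : <<Sg>>%g = (N / T0)%g)
  (BN_mul : forall s w, s \in Sg -> w \in (N / T0)%g ->
     (val s * B * val w)%g \subset
       ((B * val w * B) :|: (B * val (s * w)%g * B))%g).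

Let sT0B : T0 \subset B. Proof. by rewrite defT0 subsetIl. Qed.
Let sT0N : T0 \subset N. Proof. by rewrite defT0 subsetIr. Qed.
Let nT0 x : x \in N -> x \in 'N(T0).
Proof. exact/subsetP/normal_norm. Qed.

Definition cell (n : gT) : {set gT} := B :* n * B.

Lemma cellP n y :
  reflect (exists b1, exists b2, [/\ b1 \in B, b2 \in B & y = b1 * n * b2])
          (y \in cell n).
Proof.
apply: (iffP mulsgP) => [[x b2 /rcosetP[b1 Bb1 ->] Bb2 ->] | [b1 [b2 []]]].
  by exists b1, b2.
move=> Bb1 Bb2 ->.
by exists (b1 * n) b2; rewrite ?rcoset_refl // mem_rcoset mulgK.
Qed.

Lemma cell_refl n : n \in cell n.
Proof. by apply/cellP; exists 1, 1; rewrite !group1 mul1g mulg1. Qed.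

Lemma cell_sym n y : y \in cell n -> n \in cell y.
Proof.
case/cellP=> b1 [b2 [Bb1 Bb2 ->]]; apply/cellP; exists b1^-1, b2^-1.
by rewrite !groupV !mulgA mulVg mul1g mulgK.
Qed.

Lemma cell_trans n m y : y \in cell n -> n \in cell m -> y \in cell m.
Proof.
case/cellP=> b1 [b2 [Bb1 Bb2 ->]] /cellP[c1 [c2 [Bc1 Bc2 ->]]]; apply/cellP.
by exists (b1 * c1), (c2 * b2); rewrite !groupM // !mulgA.
Qed.

Lemma cellM n y b1 b2 : y \in cell n -> b1 \in B -> b2 \in B ->
  b1 * y * b2 \in cell n.
Proof.
by move=> Hy Bb1 Bb2; apply: cell_trans _ Hy; apply/cellP; exists b1, b2.
Qed.

Lemma cellMr n y b : y \in cell n -> b \in B -> y * b \in cell n.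
Proof. by move=> Hy Bb; rewrite -(mul1g y); apply: cellM. Qed.

Lemma cell_T0coset x y : y \in B * (T0 :* x) * B -> y \in cell x.
Proof.
case/mulsgP=> z b2 /mulsgP[b1 tx Bb1 /rcosetP[t T0t ->] ->] Bb2 ->.
apply/cellP; exists (b1 * t), b2; split; rewrite ?mulgA //.
by rewrite groupM // (subsetP sT0B).
Qed.

Lemma cell_simple_mul s ns m b : s \in Sg -> ns \in N -> coset T0 ns = s ->
  m \in N -> b \in B -> ns * b * m \in cell m :|: cell (ns * m).
Proof.
move=> Ss Nns Ens Nm Bb.
have := subsetP (BN_mul Ss (mem_quotient T0 Nm)) (ns * b * m).
have vcoset x : x \in N -> val (coset T0 x) = T0 :* x by move/nT0/val_coset.
rewrite -Ens -morphM ?nT0 // !vcoset ?groupM //.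
case/(_ _)/setUP; first by rewrite !mem_mulg ?rcoset_refl.
  by move/cell_T0coset; rewrite inE => ->.
by move/cell_T0coset; rewrite inE => ->; rewrite orbT.
Qed.

Lemma Sg_inv s : s \in Sg -> s^-1 = s.
Proof.
move=> Ss; apply/eqP; rewrite eq_invg_mul -[s * s]/(s ^+ 2).
by rewrite -(invS Ss) expg_order.
Qed.

Definition Sword k (w : coset_of T0) :=
  exists2 c : 'I_k -> coset_of T0, forall j, c j \in Sg & w = \prod_j c j.

Lemma Sword_exists n : n \in N -> exists k, Sword k (coset T0 n).
Proof.
move=> Nn; have: coset T0 n \in <<Sg>> by rewrite genW mem_quotient.
by case/gen_prodgP=> k [c Sc E]; exists k, c.
Qed.

Lemma Sword_step k n : n \in N -> Sword k.+1 (coset T0 n) ->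
  exists s, exists ns, [/\ s \in Sg, ns \in N, coset T0 ns = s &
      Sword k (coset T0 (ns^-1 * n))].
Proof.
move=> Nn [c Sc]; rewrite big_ord_recl => E.
have /morphimP[ns _ Nns Ens] := subsetP sSW _ (Sc ord0).
exists (c ord0), ns; split=> //; exists (fun j => c (lift ord0 j)) => //.
by rewrite morphM ?morphV ?nT0 ?groupV //= -Ens E mulKg.
Qed.

Lemma Sword0 n : n \in N -> Sword 0 (coset T0 n) -> n \in T0.
Proof. by move=> Nn [c _]; rewrite big_ord0; apply: coset_idr; rewrite nT0. Qed.

Lemma cell_inj n n' : n \in N -> n' \in N -> n' \in cell n ->
  coset T0 n' = coset T0 n.
Proof.
move=> Nn; have [k Wn] := Sword_exists Nn.
elim: k n Nn Wn n' => [|k IH] n Nn Wn n' Nn' Hn'.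
  have T0n := Sword0 Nn Wn.
  have T0n' : n' \in T0.
    rewrite defT0 inE Nn' andbT; case/cellP: Hn' => b1 [b2 [Bb1 Bb2 ->]].
    by rewrite !groupM // (subsetP sT0B).
  by rewrite !coset_id.
have [s [ns [Ss Nns Ens Wn1]]] := Sword_step Nn Wn.
have Nnsi : ns^-1 \in N by rewrite groupV.
have Nn1 : ns^-1 * n \in N by rewrite groupM.
have Esi : coset T0 ns^-1 = s by rewrite morphV ?nT0 //= Ens Sg_inv.
have /cellP[b1 [b2 [Bb1 Bb2 En]]] := cell_sym Hn'.
have En1 : ns^-1 * n = ns^-1 * b1 * n' * b2 by rewrite En !mulgA.
case/setUP: (cell_simple_mul Ss Nnsi Esi Nn' Bb1) => Hc.
  have Hn1 : ns^-1 * n \in cell n' by rewrite En1 cellMr.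
  rewrite (IH _ Nn1 Wn1 n' Nn' (cell_sym Hn1)).
  exact/esym/(IH _ Nn1 Wn1 n Nn (cell_trans (cell_sym Hn') (cell_sym Hn1))).
have Hn1 : ns^-1 * n \in cell (ns^-1 * n') by rewrite En1 cellMr.
move: (IH _ Nn1 Wn1 _ (groupM Nnsi Nn') (cell_sym Hn1)).
by rewrite !morphM ?nT0 // => /mulgI.
Qed.

Lemma NBN_cell n b m : n \in N -> b \in B -> m \in N ->
  exists2 m', m' \in N & n * b * m \in cell m'.
Proof.
move=> Nn; have [k] := Sword_exists Nn.
elim: k n Nn => [|k IH] n Nn Wn Bb Nm.
  have T0n := Sword0 Nn Wn.
  exists m => //; apply/cellP; exists (n * b), 1.
  by rewrite mulg1 group1 groupM // (subsetP sT0B).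
have [s [ns [Ss Nns Ens Wn1]]] := Sword_step Nn Wn.
have Nn1 : ns^-1 * n \in N by rewrite groupM ?groupV.
have [m1 Nm1 /cellP[b1 [b2 [Bb1 Bb2 E]]]] := IH _ Nn1 Wn1 Bb Nm.
have -> : n * b * m = ns * b1 * m1 * b2.
  by apply: (mulgI ns^-1); rewrite !mulgA E mulVg mul1g.
case/setUP: (cell_simple_mul Ss Nns Ens Nm1 Bb1) => Hc.
  by exists m1; last exact: cellMr.
by exists (ns * m1); [exact: groupM | exact: cellMr].
Qed.

Lemma cell_cover y : y \in G -> exists2 n, n \in N & y \in cell n.
Proof.
rewrite genG => /gen_prodgP[k [c Hc ->]].
elim: k c Hc => [|k IH] c Hc.
  by exists 1; rewrite ?group1 ?big_ord0 ?cell_refl.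
rewrite big_ord_recl.
have [m Nm /cellP[b1 [b2 [Bb1 Bb2 ->]]]] := IH _ (fun j => Hc (lift ord0 j)).
case/setUP: (Hc ord0) => Hc0.
  by exists m => //; rewrite !mulgA; apply: cellM; rewrite ?cell_refl ?groupM.
have [m' Nm' Hm'] := NBN_cell Hc0 Bb1 Nm.
by exists m' => //; rewrite !mulgA; apply: cellMr.
Qed.

Lemma cell_subG n : n \in N -> cell n \subset G.
Proof.
move=> Nn; apply/subsetP=> y /cellP[b1 [b2 [Bb1 Bb2 ->]]].
by rewrite !groupM // ?(subsetP sBG b1) ?(subsetP sBG b2) ?(subsetP sNG n).
Qed.

Lemma card_cells_of y : y \in G -> #|[set n in N | y \in cell n]| = #|T0|.
Proof.
case/cell_cover=> n0 Nn0 Hy.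
rewrite -(card_rcoset T0 n0); apply: eq_card => n; rewrite !inE.
apply/andP/rcosetP => [[Nn Hn]|[t T0t ->]].
  have E := cell_inj Nn0 Nn (cell_trans (cell_sym Hn) Hy).
  exists (n * n0^-1); last by rewrite mulgKV.
  apply: coset_idr; first by rewrite nT0 ?groupM ?groupV.
  by rewrite morphM ?morphV ?nT0 ?groupV //= E mulgV.
split; first by rewrite groupM // (subsetP sT0N).
apply: cell_trans Hy _; apply/cellP; exists t^-1, 1.
by rewrite mulg1 mulgA mulVg mul1g group1 groupV (subsetP sT0B).
Qed.

Local Open Scope ring_scope.

(* Summing a function that is constant on Bruhat cells: by [card_cells_of],
   each y in G is counted |T0| times when summing over n in N and y in BnB. *)
Lemma sum_cells (R : nmodType) (f : gT -> R) :
    (forall n y, n \in N -> y \in cell n -> f y = f n) ->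
  (\sum_(y in G) f y) *+ #|T0| = \sum_(n in N) f n *+ #|cell n|.
Proof.
move=> fcell; rewrite -sumrMnl.
transitivity (\sum_(y in G) \sum_(n in N | y \in cell n) f n).
  apply: eq_bigr => y Gy; rewrite -(card_cells_of Gy) -sumr_const.
  apply: eq_big => [n | n]; first by rewrite inE.
  by rewrite inE => /andP[Nn Hy]; rewrite (fcell n).
rewrite (exchange_big_dep (mem N)) /=; last by move=> y n _ /andP[].
apply: eq_bigr => n Nn; rewrite -sumr_const; apply: eq_bigl => y.
rewrite Nn /=; case Hy: (y \in cell n); rewrite ?andbF // andbT.
exact: (subsetP (cell_subG Nn)).
Qed.

Variables (p : nat) (U : {group gT}).
Hypotheses (defB : U ><| T0 = B) (hallU : p.-Sylow(B) U).

Let sUB : U \subset B. Proof. by have [/andP[]] := sdprod_context defB. Qed.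
Let nUB : U <| B. Proof. by have [] := sdprod_context defB. Qed.

Local Notation infl := (cfSdprod defB).

(* U is the set of p-elements of B, so conjugation cannot move an element of
   U to an element of B outside U. *)
Lemma conj_in_U u y : u \in U -> (u ^ y)%g \in B -> (u ^ y)%g \in U.
Proof.
move=> Uu Bu; rewrite (mem_normal_Hall hallU nUB) // p_eltJ.
exact: mem_p_elt (pHall_pgroup hallU) Uu.
Qed.

Definition mackey_term (a b : 'CF(T0)) (y : gT) :=
  \sum_(x in B) infl a x * (infl b (x ^ y)%g)^*.

(* Conjugating by elements of B, the Mackey term is constant on each cell. *)
Lemma mackey_term_cell a b n y : y \in cell n ->
  mackey_term a b y = mackey_term a b n.
Proof.
case/cellP=> b1 [b2 [Bb1 Bb2 ->]].
rewrite /mackey_term (reindex_astabs 'J b1^-1%g) ?astabsJ; last first.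
  by rewrite groupV (subsetP (normG B)).
apply: eq_bigr => x Bx /=.
rewrite [infl a _]cfunJ ?groupV // -conjgM.
have -> : (b1^-1 * (b1 * n * b2) = n * b2)%g by rewrite -!mulgA mulKg.
by rewrite conjgM (cfunJ _ _ Bb2).
Qed.

(* On n in N, writing x = u t with u in U, t in T0: only the u in B^(n^-1)
   contribute, each with the inner product of a and b^(n^-1) over T0. *)
Lemma mackey_term_N a b n : n \in N ->
  mackey_term a b n =
    (#|U :&: B :^ n^-1|%:R * #|T0|%:R) * '[a, (b ^ (n^-1)%g)%CF].
Proof.
move=> Nn; have nn := nT0 Nn; have nni : (n^-1)%g \in 'N(T0) by rewrite groupV.
rewrite /mackey_term (sum_sdprod defB).
transitivity (\sum_(u in U) (if u \in B :^ n^-1 then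
     \sum_(t in T0) a t * ((b ^ (n^-1)%g)%CF t)^* else 0)).
  apply: eq_bigr => u Uu; case: ifP => Hu.
    apply: eq_bigr => t T0t; rewrite cfSdprodE // conjMg.
    have Un : (u ^ n)%g \in U by apply: conj_in_U; rewrite // -mem_conjgV.
    by rewrite cfSdprodE // ?memJ_norm // (cfConjgE _ _ nni) invgK.
  rewrite big1 // => t T0t; rewrite conjMg [infl b _]cfun0 ?conjC0 ?mulr0 //.
  apply/negP => Hb; move/negbT: Hu; rewrite mem_conjgV => /negP; apply.
  rewrite -(mulgK (t ^ n)%g (u ^ n)%g) groupM // groupV (subsetP sT0B) //.
  by rewrite memJ_norm.
rewrite -big_mkcondr /= sumr_const.
have -> : #|[pred u in U | u \in B :^ n^-1]| = #|U :&: B :^ n^-1|.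
  by apply: eq_card => u; rewrite !inE.
by rewrite cfdotE mulrA mulfK ?neq0CG // mulr_natl.
Qed.

(* B n B = U (B^(n^-1)) n, since T0 n = n T0^(n); hence the size of a cell. *)
Lemma cell_rcoset n : n \in N -> cell n = (U * (B :^ n^-1)) :* n.
Proof.
move=> Nn; have nn := nT0 Nn; have [_ _ defUT _ _] := sdprod_context defB.
apply/setP => x; apply/idP/idP.
  case/cellP=> b1 [b2 [Bb1 Bb2 ->]].
  have /mulsgP[u t Uu T0t ->] : b1 \in (U * T0)%g by rewrite defUT.
  apply/rcosetP; exists (u * (t * n * b2 * n^-1))%g; last first.
    by rewrite -!mulgA mulVg mulg1.
  have E : ((t * n * b2 * n^-1) ^ n = t ^ n * b2)%g.
    by rewrite !conjgE !mulgA mulgKV.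
  rewrite mem_mulg // mem_conjgV E.
  by rewrite groupM // (subsetP sT0B) // memJ_norm.
case/rcosetP=> y /mulsgP[u c Uu Bc ->] ->.
apply/cellP; exists u, (c ^ n)%g; split; rewrite -?mem_conjgV ?(subsetP sUB) //.
by rewrite conjgE !mulgA mulgK.
Qed.

Lemma card_cell n : n \in N ->
  (#|cell n| * #|U :&: B :^ n^-1| = #|U| * #|B|)%N.
Proof.
move=> Nn; rewrite cell_rcoset // card_rcoset.
by rewrite -(mul_cardG U (B :^ n^-1)%G) cardJg.
Qed.

Lemma cfdot_Ind_infl a b : '['Ind[G] (infl a), 'Ind[G] (infl b)] =
  #|T0|%:R^-1 * \sum_(n in N) '[a, (b ^ (n^-1)%g)%CF].
Proof.
(* Frobenius reciprocity and the definition of induction reduce the inner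
   product to |B|^-2 times the sum of the Mackey terms over G. *)
rewrite -Frobenius_reciprocity cfdotE.
have -> : \sum_(x in B) infl a x * ('Res[B] ('Ind[G] (infl b)) x)^* =
          #|B|%:R^-1 * \sum_(y in G) mackey_term a b y.
  transitivity (\sum_(x in B) #|B|%:R^-1 *
                 \sum_(y in G) infl a x * (infl b (x ^ y)%g)^*).
    apply: eq_bigr => x Bx; rewrite cfResE // cfIndE // rmorphM /= fmorphV.
    by rewrite rmorph_nat rmorph_sum mulrCA mulr_sumr.
  by rewrite -mulr_sumr exchange_big.
have -> : \sum_(y in G) mackey_term a b y =
          #|T0|%:R^-1 * \sum_(n in N) mackey_term a b n *+ #|cell n|.
  rewrite -sum_cells => [|n y _]; last exact: mackey_term_cell.
  by rewrite -(mulr_natl (\sum_(y in G) _)) mulKf ?neq0CG.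
have cell_termE n : n \in N -> mackey_term a b n *+ #|cell n| =
    (#|B|%:R * #|B|%:R) * '[a, (b ^ (n^-1)%g)%CF].
  move=> Nn; rewrite -mulr_natl mackey_term_N // mulrA; congr (_ * _).
  rewrite -!natrM; congr _%:R.
  by rewrite mulnA card_cell // mulnAC (sdprod_card defB).
rewrite (eq_bigr _ cell_termE) -mulr_sumr.
set t := #|T0|%:R; set c := #|B|%:R.
rewrite [c^-1 * (t^-1 * _)]mulrCA [c^-1 * (t^-1 * _)]mulrCA; congr (_ * _).
by rewrite -mulrA !mulKf ?neq0CG.
Qed.

(* Harish-Chandra induction from T0 is W0-invariant: by the Mackey formula,
   X = Ind infl psi and Y = Ind infl psi^m satisfy '[X, Y] = '[Y] = '[X],
   hence '[X - Y] = 0. *)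
Lemma cfInd_infl_conjg (psi : 'CF(T0)) m : m \in N ->
  'Ind[G] (infl (psi ^ m)%CF) = 'Ind[G] (infl psi).
Proof.
move=> Nm.
set X := 'Ind[G] (infl psi); set Y := 'Ind[G] (infl (psi ^ m)%CF).
have cM y z : y \in N -> z \in N -> (psi ^ (y * z)%g)%CF = ((psi ^ y) ^ z)%CF.
  by move=> Ny Nz; exact: (cfConjgM psi nT0N Ny Nz).
have dotXY : '[X, Y] = '[X].
  rewrite /X /Y !cfdot_Ind_infl; congr (_ * _).
  rewrite (reindex_astabs 'R m) ?astabsR //=.
  apply: eq_bigr => n Nn; rewrite -cM ?groupV ?groupM //.
  by rewrite invMg mulKVg.
have normY : '[Y] = '[X].
  rewrite /X /Y !cfdot_Ind_infl; congr (_ * _).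
  rewrite (reindex_astabs 'J m) ?astabsJ ?(subsetP (normG N)) //=.
  apply: eq_bigr => n Nn; have Nnm : (n ^ m)%g \in N by rewrite groupJ.
  rewrite -cM ?groupV //.
  have -> : (m * (n ^ m)^-1 = n^-1 * m)%g.
    by rewrite conjgE !invMg invgK !mulgA mulgV mul1g.
  by rewrite cM ?groupV ?groupM // cfConjg_iso.
apply/eqP; rewrite -subr_eq0 -cfnorm_eq0 cfdotBl !cfdotBr (cfdotC Y X).
by rewrite dotXY normY (geC0_conj (cfnorm_ge0 X)) !subrr.
Qed.

Lemma cfTruncE (eta : 'CF(G)) b : b \in B ->
  (cfTrunc B U eta %% U)%CF b = #|U|%:R^-1 * \sum_(u in U) eta (b * u)%g.
Proof.
move=> Bb; have nUb : b \in 'N(U) by rewrite (subsetP (normal_norm nUB)).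
rewrite cfModE // /cfTrunc /ffun_Trunc cfunElock mem_quotient // sBG /= mulr1n.
congr (_ * _); rewrite val_coset // norm_rlcoset // -lcosetE /lcoset.
by rewrite big_imset //; move=> x y _ _ /mulgI.
Qed.

Lemma cfdot_TruncT (eta : 'CF(G)) (psi : 'CF(T0)) :
  '[cfTruncT B U T0 eta, psi] = '[eta, 'Ind[G] (infl psi)].
Proof.
set tau := (cfTrunc B U eta %% U)%CF.
have kU : U \subset cfker tau by apply: cfker_mod.
rewrite /cfTruncT -/tau -(cfSdprod_iso defB) (cfRes_sdprodK defB kU).
rewrite -cfdot_Res_l !cfdotE; congr (_ * _).
rewrite (eq_bigr (fun b => #|U|%:R^-1 *
            \sum_(u in U) eta (b * u)%g * (infl psi b)^*)); last first.
  by move=> b Bb; rewrite cfTruncE // -mulrA mulr_suml.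
rewrite -mulr_sumr exchange_big /=.
rewrite (eq_bigr (fun _ => \sum_(b in B) 'Res[B] eta b * (infl psi b)^*)).
  by rewrite sumr_const -(mulr_natl (\sum_(b in B) _)) mulKf ?neq0CG.
move=> u Uu; have Bu := subsetP sUB u Uu.
rewrite (reindex_astabs 'R u^-1%g) ?astabsR ?groupV //=.
apply: eq_bigr => b Bb; rewrite mulgKV cfResE //.
by rewrite (cfkerMr _ (subsetP (cfker_sdprod defB psi) _ _)) ?groupV.
Qed.

Lemma cfTruncT_conjg (eta : 'CF(G)) n : n \in N ->
  (cfTruncT B U T0 eta ^ n)%CF = cfTruncT B U T0 eta.
Proof.
move=> Nn; set tr := cfTruncT B U T0 eta.
have dot_conjg psi : '[(tr ^ n)%CF, psi] = '[tr, psi].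
  rewrite -{1}(cfConjgKV n psi) cfConjg_iso !cfdot_TruncT.
  by rewrite cfInd_infl_conjg ?groupV.
apply/eqP; rewrite -subr_eq0 -cfnorm_eq0.
by rewrite cfdotBl !dot_conjg subrr.
Qed.

Section CharacterTruncation.

Variable chi : 'CF(G).
Hypothesis Nchi : chi \is a character.

Let trT := cfTruncT B U T0 chi.

Lemma cfdot_TruncT_irr_nat j : '[trT, 'chi_j] \is a Num.nat.
Proof.
rewrite /trT cfdot_TruncT Cnat_cfdot_char // cfInd_char //.
by rewrite cfSdprod_char irr_char.
Qed.

Lemma cfTruncT_char : trT \is a character.
Proof.
apply/char_sum_irrP; exists (fun j => Num.truncn '[trT, 'chi_j]).
rewrite {1}[trT]cfun_sum_cfdot; apply: eq_bigr => j _.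
by rewrite truncnK // cfdot_TruncT_irr_nat.
Qed.

Hypothesis chi_p0 : forall u, u \in G -> p.-elt u -> u != 1%g -> chi u = 0.

Lemma cfTruncT1 : trT 1%g = chi 1%g / #|U|%:R.
Proof.
rewrite /trT /cfTruncT cfResE ?group1 // cfTruncE ?group1 //.
rewrite (bigD1 1%g) ?group1 //= big1 ?addr0 ?mul1g; first by rewrite mulrC.
move=> u /andP[Uu nu]; rewrite mul1g chi_p0 //.
  by rewrite (subsetP sBG) // (subsetP sUB).
exact: mem_p_elt (pHall_pgroup hallU) Uu.
Qed.

(* Every W0-conjugate of a constituent beta of the truncation is again a
   constituent, with degree 1 at least, so |W0 beta| <= chi(1) / |U|. *)
Lemma orbit_bound (i : Iirr T0) : i \in irr_constt trT ->
  #|[set conjg_Iirr i n | n in N]|%:R <= chi 1%g / #|U|%:R.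
Proof.
move=> Ci; rewrite -cfTruncT1; set O := [set conjg_Iirr i n | n in N].
have nat_ge1 (x : algC) : x \is a Num.nat -> x != 0 -> 1 <= x.
  by case/natrP=> k ->; rewrite pnatr_eq0 ler1n lt0n.
rewrite {1}[trT]cfun_sum_cfdot sum_cfunE (bigID (mem O)) /=.
rewrite -[#|O|%:R]addr0 lerD //; last first.
  apply: sumr_ge0 => j _; rewrite cfunE mulr_ge0 ?char1_ge0 ?irr_char //.
  exact: natr_ge0 (cfdot_TruncT_irr_nat j).
have -> : #|O|%:R = \sum_(j | true && (j \in O)) 1 :> algC by rewrite sumr_const.
apply: ler_sum => j /imsetP[n Nn ->].
rewrite cfunE -[1]mul1r ler_pM ?ler01 //; apply: nat_ge1;
  rewrite ?Cnat_irr1 ?irr1_neq0 ?cfdot_TruncT_irr_nat //.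
by rewrite conjg_IirrE -[trT](cfTruncT_conjg chi Nn) cfConjg_iso -irr_consttE.
Qed.

(* When chi(1) = |U| the truncation is a linear, hence irreducible,
   character of B/U. *)
Lemma cfTrunc_irr : chi 1%g = #|U|%:R -> cfTrunc B U chi \in irr (B / U)%g.
Proof.
move=> chi1; have trT1 : trT 1%g = 1 by rewrite cfTruncT1 chi1 mulfV ?neq0CG.
have lin : trT \is a linear_char by rewrite qualifE /= cfTruncT_char trT1 eqxx.
have kU : U \subset cfker (cfTrunc B U chi %% U)%CF by apply: cfker_mod.
rewrite -cfMod_irr // -(cfRes_sdprodK defB kU) cfSdprod_irr.
exact: lin_char_irr.
Qed.

End CharacterTruncation.

End BNpair.

Unset Implicit Arguments.
Local Open Scope ring_scope.

Theorem proposition4p5 (gT : finGroupType) (p : nat)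
    (G B N U T0 : {group gT}) (Sg : {set coset_of T0})
    (* p is the defining characteristic *)
    (p_pr : prime p)
    (* (B, N) is a BN-pair (Tits system) of G with Weyl group W0 = N/T0 *)
    (sBG : B \subset G) (sNG : N \subset G)
    (genG : G :=: <<B :|: N>>)
    (defT0 : T0 :=: B :&: N) (nT0N : T0 <| N)
    (sSW : Sg \subset (N / T0)%g)
    (invS : forall s, s \in Sg -> #[s]%g = 2%N)
    (genW : <<Sg>>%g = (N / T0)%g)
    (BN_mul : forall s w, s \in Sg -> w \in (N / T0)%g ->
       (val s * B * val w)%g \subset
         ((B * val w * B) :|: (B * val (s * w)%g * B))%g)
    (BN_ns : forall s, s \in Sg -> (val s * B * val s)%g != B)
    (* the BN-pair is split of characteristic p *)
    (defB : U ><| T0 = B) (defU : U :=: 'O_p(B)) (sylU : U \in 'Syl_p(G))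
    (capBN : \bigcap_(n in N) (B :^ n) = T0) (abT0 : abelian T0)
    (* chi is a character vanishing on non-trivial p-elements *)
    (chi : 'CF(G)) (Nchi : chi \is a character)
    (chi_p0 : forall u, u \in G -> p.-elt u -> u != 1%g -> chi u = 0)
    (* beta = 'chi_i is an irreducible constituent of the truncation *)
    (i : Iirr T0) (Ci : i \in irr_constt (cfTruncT B U T0 chi)) :
  (#|[set conjg_Iirr i n | n in N]|%:R <= chi 1%g / (#|G|`_p)%:R)
  /\ (chi 1%g = (#|G|`_p)%:R ->
        cfTrunc B U chi \in irr (B / U)%g
        /\ (forall n, n \in N -> (cfTruncT B U T0 chi ^ n)%CF = cfTruncT B U T0 chi)).
Proof.
have sylG : p.-Sylow(G) U by rewrite inE in sylU.
have [/andP[sUB _] _ _ _ _] := sdprod_context defB.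
have sylB : p.-Sylow(B) U := pHall_subl sUB sBG sylG.
have <- : #|U| = (#|G|`_p)%N := card_Hall sylG.
split; first exact: (orbit_bound sBG sNG genG defT0 nT0N sSW invS genW BN_mul
                                 defB sylB Nchi chi_p0 Ci).
move=> chi1; split; first exact: (cfTrunc_irr sBG defT0 defB sylB Nchi chi_p0 chi1).
exact: (cfTruncT_conjg sBG sNG genG defT0 nT0N sSW invS genW BN_mul defB sylB chi).
Qed.
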